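(* Let $\mathrm{M}=\langle e_1+I,\ e_2+I,\ A\rangle$, where $e_1,e_2$ are the standard basis vectors of $E^2$ and $A=\mathrm{diag}(1,-1)$. Then $$N_A(\mathrm{M})=\{b+B : 2b_2\in\mathbb Z \text{ and } B\in\langle -I, A\rangle\},$$ where $b=(b_1,b_2)$.
   Context: Affine maps of $E^2$ are written $b+B$ (meaning $x\mapsto b+Bx$, $b\in E^2$, $B\in\mathrm{GL}(2,\mathbb R)$); $b+I$ is translation by $b$. $N_A(\mathrm{M})$ denotes the normalizer of $\mathrm{M}$ in the group of affine transformations of $E^2$. (Here $E^2/\mathrm{M}$ is an annulus.) *)

From HB Require Import structures.
From mathcomp Require Import all_boot all_order all_algebra.
From mathcomp Require Import reals.
Set Implicit Arguments. Unset Strict Implicit. Unset Printing Implicit Defensive.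
Import Order.TTheory GRing.Theory Num.Theory.
Local Open Scope ring_scope.

Section Affine.
Variable R : realType.

(* an affine map b + B : x |-> b + B x, represented by the pair (b, B) *)
Definition aff := ('cV[R]_2 * 'M[R]_2)%type.

Definition is_affine (f : aff) : Prop := f.2 \in unitmx.

Definition aff_comp (f g : aff) : aff := (f.1 + f.2 *m g.1, f.2 *m g.2).
Definition aff_inv (f : aff) : aff := (- (invmx f.2 *m f.1), invmx f.2).
Definition aff_id : aff := (0, 1%:M).

Inductive aff_gen (S : aff -> Prop) : aff -> Prop :=
| ag_id : aff_gen S aff_id
| ag_base f : S f -> aff_gen S f
| ag_comp f g : aff_gen S f -> aff_gen S g -> aff_gen S (aff_comp f g)
| ag_inv f : aff_gen S f -> aff_gen S (aff_inv f).

Inductive mx_gen (S : 'M[R]_2 -> Prop) : 'M[R]_2 -> Prop :=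
| mg_id : mx_gen S 1%:M
| mg_base B : S B -> mx_gen S B
| mg_mul B C : mx_gen S B -> mx_gen S C -> mx_gen S (B *m C)
| mg_inv B : mx_gen S B -> mx_gen S (invmx B).

Definition aff_conj (f g : aff) : aff := aff_comp (aff_comp f g) (aff_inv f).

Definition in_normalizer (G : aff -> Prop) (f : aff) : Prop :=
  is_affine f /\
  (forall g, G g -> G (aff_conj f g)) /\
  (forall g, G g -> exists h, G h /\ g = aff_conj f h).

Definition e1 : 'cV[R]_2 := delta_mx 0 0.
Definition e2 : 'cV[R]_2 := delta_mx 1 0.
Definition Amx : 'M[R]_2 := diag_mx (\row_(i < 2) (if i == 0 then 1 else -1)).

Definition Mgens (f : aff) : Prop :=
  f = (e1, 1%:M) \/ f = (e2, 1%:M) \/ f = (0, Amx).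
Definition Mgrp : aff -> Prop := aff_gen Mgens.

Definition LinGens (B : 'M[R]_2) : Prop := B = - 1%:M \/ B = Amx.

End Affine.

From HB Require Import structures.
From mathcomp Require Import all_boot all_order all_algebra.
From mathcomp Require Import reals.
From mathcomp Require Import lra.

Set Implicit Arguments.
Unset Strict Implicit.
Unset Printing Implicit Defensive.
Import Order.TTheory GRing.Theory Num.Theory.
Local Open Scope ring_scope.

(* M consists of the maps v + H with v integral and H in {I, A}.  If b + B
   normalizes M, the conjugate of A must again be a reflection v + A of M, so
   B commutes with A and is diagonal; its translation part b - A b = (0, 2 b_2)
   is integral.  Conjugating the integral translations in both directions shows
   that the diagonal entries of B are integers with integer inverses, i.e. +-1,
   which is exactly the group <-I, A>.  Conversely, for such b + B the
   conjugate of v + I is B v + I and that of A is (0, 2 b_2) + A. *)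

Lemma sqr_eq1_int (R : archiNumDomainType) (x : R) : x ^+ 2 = 1 -> x \is a Num.int.
Proof.
by move/eqP; rewrite sqrf_eq1 => /orP[] /eqP->; rewrite ?rpredN int_num1.
Qed.

Lemma int_mul_eq1_sqr (R : archiRealDomainType) (x y : R) :
  x \is a Num.int -> y \is a Num.int -> x * y = 1 -> x ^+ 2 = 1.
Proof.
move=> x_int y_int xy1.
have x_neq0 : x != 0 by apply: contra_eq_neq xy1 => ->; rewrite mul0r eq_sym oner_eq0.
have y_neq0 : y != 0 by apply: contra_eq_neq xy1 => ->; rewrite mulr0 eq_sym oner_eq0.
have := sqr_intr_ge1 x_int x_neq0; have := sqr_intr_ge1 y_int y_neq0.
by nra.
Qed.

Section SignedDiagonal.
Variables (R : comUnitRingType) (n : nat).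

Definition signed_diag (B : 'M[R]_n) : Prop :=
  exists2 d : 'rV_n, (forall i, d 0 i ^+ 2 = 1) & B = diag_mx d.

Lemma signed_diag_scalar (s : R) : s ^+ 2 = 1 -> signed_diag s%:M.
Proof. by move=> s2; exists (const_mx s) => [i|]; rewrite ?mxE ?diag_const_mx. Qed.

Lemma signed_diag_mulmx B C : signed_diag B -> signed_diag C -> signed_diag (B *m C).
Proof.
move=> [d d2 ->] [e e2 ->]; rewrite mulmx_diag.
by exists (\row_j (d 0 j * e 0 j)) => // i; rewrite mxE exprMn d2 e2 mulr1.
Qed.

Lemma signed_diag_sqr B : signed_diag B -> B *m B = 1%:M.
Proof.
move=> [d d2 ->]; rewrite mulmx_diag -diag_const_mx; congr diag_mx.
by apply/rowP => i; rewrite !mxE -expr2 d2.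
Qed.

Lemma signed_diag_unit B : signed_diag B -> B \in unitmx.
Proof. by move=> /signed_diag_sqr /mulmx1_unit []. Qed.

Lemma signed_diag_invmx B : signed_diag B -> invmx B = B.
Proof.
move=> Bsd; have BB := signed_diag_sqr Bsd.
by rewrite -[invmx B]mulmx1 -BB mulmxA mulVmx ?mul1mx ?signed_diag_unit.
Qed.

End SignedDiagonal.

Section IntegralColumns.
Variables (R : archiNumDomainType) (n : nat).

Definition int_col (v : 'cV[R]_n) : Prop := forall i, v i 0 \is a Num.int.

Lemma int_col0 : int_col 0.
Proof. by move=> i; rewrite mxE int_num0. Qed.

Lemma int_colD v w : int_col v -> int_col w -> int_col (v + w).
Proof. by move=> vi wi i; rewrite mxE rpredD. Qed.

Lemma int_colN v : int_col v -> int_col (- v).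
Proof. by move=> vi i; rewrite mxE rpredN. Qed.

Lemma int_col_signed_diag B v : signed_diag B -> int_col v -> int_col (B *m v).
Proof.
by move=> [d d2 ->] vi i; rewrite mul_diag_mx mxE rpredM ?vi ?sqr_eq1_int ?d2.
Qed.

End IntegralColumns.

Section TwoByTwo.
Variable R : pzRingType.

Lemma ord2_cases (i : 'I_2) : i = 0 \/ i = 1.
Proof. by case: i => [[|[|]]] // ?; [left|right]; apply/val_inj. Qed.

Lemma matrix2P (M N : 'M[R]_2) :
  M 0 0 = N 0 0 -> M 0 1 = N 0 1 -> M 1 0 = N 1 0 -> M 1 1 = N 1 1 -> M = N.
Proof.
move=> e00 e01 e10 e11; apply/matrixP => i j.
by case: (ord2_cases i) => ->; case: (ord2_cases j) => ->.
Qed.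

Lemma col2P (v w : 'cV[R]_2) : v 0 0 = w 0 0 -> v 1 0 = w 1 0 -> v = w.
Proof.
by move=> e0 e1; apply/matrixP => i j; rewrite [j]ord1; case: (ord2_cases i) => ->.
Qed.

Lemma mulmx2E m n (M : 'M[R]_(m, 2)) (N : 'M[R]_(2, n)) i j :
  (M *m N) i j = M i 0 * N 0 j + M i 1 * N 1 j.
Proof.
rewrite mxE !big_ord_recl big_ord0 addr0.
by have -> : lift ord0 ord0 = 1 :> 'I_2 by apply/val_inj.
Qed.

End TwoByTwo.

Section Normalizer.
Variable R : realType.
Local Notation A := (Amx R).
Local Notation M := (@Mgrp R).

Ltac mx2_eval := rewrite /e1 /e2 /Amx ?(mulmx2E, mxE) /=
  ?(mulr1n, mulr0n, mulr1, mulr0, mul1r, mul0r, addr0, add0r, mulN1r, mulNr, mulrN, opprK, oppr0).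

Lemma signed_diag_Amx : signed_diag A.
Proof. by eexists => // i; rewrite mxE; case: ifP; rewrite ?sqrrN expr1n. Qed.

Lemma signed_diag_commA B : signed_diag B -> B *m A = A *m B.
Proof. by move=> [d _ ->]; exact: diag_mxC. Qed.

Lemma Amx_sqr : A *m A = 1%:M.
Proof. exact: signed_diag_sqr signed_diag_Amx. Qed.

Lemma conj_Amx_neq1 B : B \in unitmx -> B *m A *m invmx B <> 1%:M.
Proof.
move=> B_unit conj1.
have A1 : A = 1%:M by rewrite -(mulKmx B_unit A) -(mulmxKV B_unit (B *m A)) conj1 mul1mx mulVmx.
by have := congr1 (fun N : 'M[R]_2 => N 1 1) A1; mx2_eval; lra.
Qed.

Lemma commA_diag B : B *m A = A *m B -> B = diag_mx (\row_i B i i).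
Proof.
move=> BA.
have e01 := congr1 (fun N : 'M[R]_2 => N 0 1) BA.
have e10 := congr1 (fun N : 'M[R]_2 => N 1 0) BA.
by move: e01 e10; mx2_eval => e01 e10; apply/matrix2P; mx2_eval; lra.
Qed.

Implicit Types (f g h : aff R) (b v w : 'cV[R]_2) (B : 'M[R]_2).

Lemma aff_compA f g h : aff_comp (aff_comp f g) h = aff_comp f (aff_comp g h).
Proof. by rewrite /aff_comp /= mulmxDr !mulmxA addrA. Qed.

Lemma aff_comp1g f : aff_comp (aff_id R) f = f.
Proof. by case: f => v B; rewrite /aff_comp /= add0r !mul1mx. Qed.

Lemma aff_compg1 f : aff_comp f (aff_id R) = f.
Proof. by case: f => v B; rewrite /aff_comp /= mulmx0 addr0 mulmx1. Qed.

Lemma aff_compgV f : f.2 \in unitmx -> aff_comp f (aff_inv f) = aff_id R.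
Proof. by move=> f_unit; rewrite /aff_comp /= mulmxN mulmxA mulmxV // mul1mx subrr. Qed.

Lemma aff_compVg f : f.2 \in unitmx -> aff_comp (aff_inv f) f = aff_id R.
Proof. by move=> f_unit; rewrite /aff_comp /= mulVmx // addrC subrr. Qed.

Lemma aff_invK f : f.2 \in unitmx -> aff_inv (aff_inv f) = f.
Proof. by case: f => v B B_unit; rewrite /aff_inv /= invmxK mulmxN opprK mulKVmx. Qed.

Lemma aff_conjK f g : f.2 \in unitmx -> aff_conj f (aff_conj (aff_inv f) g) = g.
Proof.
move=> f_unit; rewrite /aff_conj aff_invK // !aff_compA aff_compgV // aff_compg1.
by rewrite -aff_compA aff_compgV // aff_comp1g.
Qed.

Lemma aff_conj_comp f g h : f.2 \in unitmx ->
  aff_conj f (aff_comp g h) = aff_comp (aff_conj f g) (aff_conj f h).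
Proof.
move=> f_unit; rewrite /aff_conj !aff_compA.
by rewrite -[aff_comp (aff_inv f) _]aff_compA aff_compVg // aff_comp1g.
Qed.

Lemma aff_conj_trans b B v : B \in unitmx -> aff_conj (b, B) (v, 1%:M) = (B *m v, 1%:M).
Proof.
move=> B_unit; rewrite /aff_conj /aff_comp /aff_inv /= mulmx1 mulmxV // mulmxN mulmxA mulmxV //.
by rewrite mul1mx addrAC subrr add0r.
Qed.

Lemma aff_conj_A b B : B \in unitmx -> B *m A = A *m B ->
  aff_conj (b, B) (0, A) = (b - A *m b, A).
Proof.
move=> B_unit BA; rewrite /aff_conj /aff_comp /aff_inv /= mulmx0 addr0 BA.
by rewrite mulmxN mulmxA !mulmxK.
Qed.

Definition Mset g : Prop := int_col g.1 /\ (g.2 = 1%:M \/ g.2 = A).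

Lemma int_col_delta i : int_col (delta_mx i 0 : 'cV[R]_2).
Proof. by move=> k; rewrite mxE; apply/intr_nat/natr_nat. Qed.

Lemma int_col_subAmx b : int_col (b - A *m b) <-> 2 * b 1 0 \is a Num.int.
Proof.
have b0 : (b - A *m b) 0 0 = 0 by mx2_eval; rewrite subrr.
have b1 : (b - A *m b) 1 0 = 2 * b 1 0 by mx2_eval; rewrite mulr2n mulrDl mul1r.
split=> [/(_ 1) | b_int i]; first by rewrite b1.
by case: (ord2_cases i) => ->; rewrite ?b0 ?b1 ?int_num0.
Qed.

Lemma Mlin_signed_diag B : B = 1%:M \/ B = A -> signed_diag B.
Proof.
by move=> [->|->]; [apply: signed_diag_scalar; rewrite expr1n | exact: signed_diag_Amx].
Qed.

Lemma Mgrp_Mset g : M g -> Mset g.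
Proof.
elim=> {g} [|f gen_f|f g _ Mf _ Mg|f _ Mf].
- by split; [exact: int_col0 | left].
- by case: gen_f => [|[|]] ->; split => /=; by [exact: int_col_delta | exact: int_col0 | left | right].
- case: f g Mf Mg => [v B] [w C] [/= v_int B_lin] [/= w_int C_lin]; split => /=.
    exact: int_colD v_int (int_col_signed_diag (Mlin_signed_diag B_lin) w_int).
  by case: B_lin C_lin => -> [] ->; rewrite ?mul1mx ?mulmx1 ?Amx_sqr; [left|right|right|left].
- case: f Mf => v B [/= v_int B_lin]; have B_sd := Mlin_signed_diag B_lin.
  rewrite /Mset /aff_inv /= signed_diag_invmx //.
  by split => //; apply/int_colN/int_col_signed_diag.
Qed.

Lemma Mgrp_transD v w : M (v, 1%:M) -> M (w, 1%:M) -> M (v + w, 1%:M).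
Proof. by move=> Mv Mw; have := ag_comp Mv Mw; rewrite /aff_comp /= !mul1mx. Qed.

Lemma Mgrp_transN v : M (v, 1%:M) -> M (- v, 1%:M).
Proof. by move=> Mv; have := ag_inv Mv; rewrite /aff_inv /= invmx1 !mul1mx. Qed.

Lemma Mgrp_transz v (k : int) : M (v, 1%:M) -> M (v *~ k, 1%:M).
Proof.
have Mgrp_transMn m : M (v, 1%:M) -> M (v *+ m, 1%:M).
  move=> Mv; elim: m => [|m IH]; first by rewrite mulr0n; exact: ag_id.
  by rewrite mulrS; apply: Mgrp_transD.
by case: k => m Mv; rewrite ?NegzE ?mulrNz; [|apply: Mgrp_transN]; apply: Mgrp_transMn.
Qed.

Lemma Mgrp_trans v : int_col v -> M (v, 1%:M).
Proof.
move=> v_int; have [/intrP[m vm] /intrP[n vn]] := (v_int 0, v_int 1).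
have -> : v = e1 R *~ m + e2 R *~ n by apply: col2P; rewrite -!scaler_int; mx2_eval.
by apply: Mgrp_transD; apply: Mgrp_transz; apply: ag_base; rewrite /Mgens; tauto.
Qed.

Lemma Mgrp_A : M (0, A).
Proof. by apply: ag_base; rewrite /Mgens; tauto. Qed.

Lemma Mset_Mgrp g : Mset g -> M g.
Proof.
case: g => v B [/= v_int [->|->]]; first exact: Mgrp_trans.
have := ag_comp (Mgrp_trans v_int) Mgrp_A.
by rewrite /aff_comp /= mulmx0 addr0 mul1mx.
Qed.

Lemma mx_gen_LinGensE B : mx_gen (@LinGens R) B <-> signed_diag B.
Proof.
split.
  elim=> {B} [|B [->|->]|B C _ sdB _ sdC|B _ sdB].
  - by apply: signed_diag_scalar; rewrite expr1n.
  - by rewrite -raddfN; apply: signed_diag_scalar; rewrite sqrrN expr1n.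
  - exact: signed_diag_Amx.
  - exact: signed_diag_mulmx.
  - by rewrite signed_diag_invmx.
have genN1 : mx_gen (@LinGens R) (- 1%:M) by apply: mg_base; left.
have genA : mx_gen (@LinGens R) A by apply: mg_base; right.
have sign (s : R) : s ^+ 2 = 1 -> s = 1 \/ s = -1.
  by move/eqP; rewrite sqrf_eq1 => /orP[] /eqP; [left|right].
move=> [d /[dup] /(_ 0) /sign [] d0 /(_ 1) /sign [] d1 ->].
- suff -> : diag_mx d = 1%:M by exact: mg_id.
  by apply/matrix2P; mx2_eval; rewrite ?d0 ?d1.
- suff -> : diag_mx d = A by [].
  by apply/matrix2P; mx2_eval; rewrite ?d0 ?d1.
- suff -> : diag_mx d = - 1%:M *m A by exact: mg_mul.
  by apply/matrix2P; mx2_eval; rewrite ?d0 ?d1 ?oppr0.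
- suff -> : diag_mx d = - 1%:M by [].
  by apply/matrix2P; mx2_eval; rewrite ?d0 ?d1 ?oppr0.
Qed.

Lemma conj_Mgrp b B g : signed_diag B -> 2 * b 1 0 \is a Num.int ->
  M g -> M (aff_conj (b, B) g).
Proof.
move=> B_sd b_int /Mgrp_Mset [].
have B_unit := signed_diag_unit B_sd.
case: g => v C /= v_int [->|->].
  by rewrite aff_conj_trans //; apply/Mgrp_trans/int_col_signed_diag.
have -> : (v, A) = aff_comp (v, 1%:M) (0, A) by rewrite /aff_comp /= mulmx0 addr0 mul1mx.
rewrite aff_conj_comp // aff_conj_trans // aff_conj_A ?signed_diag_commA //.
apply: ag_comp; first exact/Mgrp_trans/int_col_signed_diag.
by apply: Mset_Mgrp; split; [exact/int_col_subAmx | right].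
Qed.

Lemma in_normalizer_signed_diag b B : signed_diag B -> 2 * b 1 0 \is a Num.int ->
  in_normalizer M (b, B).
Proof.
move=> B_sd b_int; have B_unit := signed_diag_unit B_sd.
split; first exact: B_unit.
split=> g Mg; first exact: conj_Mgrp.
exists (aff_conj (aff_inv (b, B)) g); split; last by rewrite aff_conjK.
rewrite /aff_inv /= signed_diag_invmx //; apply: conj_Mgrp => //.
case: B_sd b_int => d d2 -> b_int.
rewrite mxE mul_diag_mx mxE mulrN mulrCA rpredN.
exact/rpredM/b_int/sqr_eq1_int/d2.
Qed.

Section Necessity.
Variables (b : 'cV[R]_2) (B : 'M[R]_2).
Hypothesis normB : in_normalizer M (b, B).

Let B_unit : B \in unitmx := normB.1.

Lemma normalizer_commA : B *m A = A *m B.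
Proof.
have [_ [lin1|linA]] := Mgrp_Mset (normB.2.1 _ Mgrp_A); first by case: (conj_Amx_neq1 B_unit).
by rewrite -[in RHS]linA mulmxKV.
Qed.

Lemma normalizer_2b_int : 2 * b 1 0 \is a Num.int.
Proof.
have [+ _] := Mgrp_Mset (normB.2.1 _ Mgrp_A).
by rewrite aff_conj_A ?normalizer_commA // => /int_col_subAmx.
Qed.

Lemma normalizer_diag_sqr i : B i i ^+ 2 = 1.
Proof.
have B_diag := commA_diag normalizer_commA.
have B_col v : (B *m v) i 0 = B i i * v i 0 by rewrite {1}B_diag mul_diag_mx !mxE.
have Mi := Mgrp_trans (int_col_delta i).
have [+ _] := Mgrp_Mset (normB.2.1 _ Mi).
rewrite aff_conj_trans // => /(_ i); rewrite B_col mxE !eqxx mulr1 => Bii_int.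
have [[v C] [/Mgrp_Mset [v_int C_lin] conj_v]] := normB.2.2 _ Mi.
case: C_lin conj_v => /= ->; last first.
  by move=> /(congr1 snd) /esym /(conj_Amx_neq1 B_unit).
rewrite aff_conj_trans // => -[/(congr1 (fun w : 'cV_2 => w i 0))].
rewrite B_col mxE !eqxx => /esym; exact: int_mul_eq1_sqr.
Qed.

Lemma normalizer_signed_diag : signed_diag B.
Proof.
by rewrite (commA_diag normalizer_commA); eexists => // i; rewrite mxE normalizer_diag_sqr.
Qed.

End Necessity.

End Normalizer.

Theorem lemma17 (R : realType) (b : 'cV[R]_2) (B : 'M[R]_2) :
  in_normalizer (@Mgrp R) (b, B) <->
  (B \in unitmx /\ (exists z : int, 2 * b 1 0 = z%:~R) /\ mx_gen (@LinGens R) B).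
Proof.
split=> [normB | [_ [[z bz] genB]]].
- split; first exact: normB.1.
  split; last exact/mx_gen_LinGensE/(normalizer_signed_diag normB).
  by have /intrP[z ->] := normalizer_2b_int normB; exists z.
- apply: in_normalizer_signed_diag; first exact/mx_gen_LinGensE.
  by rewrite bz intr_int.
Qed.
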